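(* Let $\zeta\in\Omega_n$ have rank $2$. For $J\in\mathbb N_0$ let $\Pi_J$ be the orthogonal projection onto the eigenspace of $\mathcal A$ with eigenvalue $J$. Then $\|\Pi_J|\zeta\rangle\|^2=\det(\mathbb 1-\zeta^*\zeta)\big(\tfrac12\operatorname{tr}(\zeta^*\zeta)\big)^J(J+1)$.
   Context: Let $A_a,B_a$ ($a=1,\dots,n$) be $2n$ independent bosonic annihilation operators on the Fock space with vacuum $|0\rangle$: $[A_a,A_b^\dagger]=[B_a,B_b^\dagger]=\delta_{ab}$, all other commutators vanishing, $A_a|0\rangle=B_a|0\rangle=0$. Define $E_{ab}=A_a^\dagger A_b+B_a^\dagger B_b+\delta_{ab}$, $\widetilde F_{ab}=B_a^\dagger A_b^\dagger-A_a^\dagger B_b^\dagger$, $\widetilde F_z=\sum_{a,b}z_{ab}\widetilde F_{ab}$, and the total area operator $\mathcal A=\sum_a\tfrac12(E_{aa}-1)$. Let $\Omega_n=\{\zeta\in M_n(\mathbb C):\zeta^{\mathsf T}=-\zeta,\ \zeta^*\zeta<\mathbb 1\}$ and $|\zeta\rangle=\det(\mathbb 1-\zeta^*\zeta)^{1/2}\exp(\tfrac12\widetilde F_\zeta)|0\rangle$. *)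

(* Bosonic Fock space over 2n modes (A_1..A_n, B_1..B_n),
   realised concretely in the orthonormal occupation-number basis |m>. *)
From HB Require Import structures.
From mathcomp Require Import all_boot all_order all_algebra.
From Stdlib Require Import ClassicalEpsilon.
Set Implicit Arguments. Unset Strict Implicit. Unset Printing Implicit Defensive.
Import Order.TTheory GRing.Theory Num.Theory.
Local Open Scope ring_scope.

Section Fock.
Variables (C : numClosedFieldType) (n : nat).

(* occupation numbers: (A-occupations, B-occupations) *)
Definition occ := ({ffun 'I_n -> nat} * {ffun 'I_n -> nat})%type.

(* a (possibly infinite) vector = its family of coefficients in the
   orthonormal occupation basis *)
Definition state := occ -> C.

Definition bump (f : {ffun 'I_n -> nat}) (a : 'I_n) : {ffun 'I_n -> nat} :=
  [ffun i => (f i + (i == a))%N].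
Definition unbump (f : {ffun 'I_n -> nat}) (a : 'I_n) : {ffun 'I_n -> nat} :=
  [ffun i => (f i - (i == a))%N].

Definition vac : state := fun m => (m == ([ffun _ => 0%N], [ffun _ => 0%N]))%:R.

Definition ket_basis (m : occ) : state := fun m' => (m' == m)%:R.

(* A_a^dagger |m> = sqrt(m_a + 1) |m + e_a>,  A_a |m> = sqrt(m_a) |m - e_a> *)
Definition Adag (a : 'I_n) (f : state) : state := fun m =>
  if (0 < m.1 a)%N then sqrtC (m.1 a)%:R * f (unbump m.1 a, m.2) else 0.
Definition Aop (a : 'I_n) (f : state) : state := fun m =>
  sqrtC (m.1 a).+1%:R * f (bump m.1 a, m.2).
Definition Bdag (a : 'I_n) (f : state) : state := fun m =>
  if (0 < m.2 a)%N then sqrtC (m.2 a)%:R * f (m.1, unbump m.2 a) else 0.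
Definition Bop (a : 'I_n) (f : state) : state := fun m =>
  sqrtC (m.2 a).+1%:R * f (m.1, bump m.2 a).

Definition Eop (a b : 'I_n) (f : state) : state := fun m =>
  Adag a (Aop b f) m + Bdag a (Bop b f) m + (a == b)%:R * f m.

Definition Ftil (a b : 'I_n) (f : state) : state := fun m =>
  Bdag a (Adag b f) m - Adag a (Bdag b f) m.
Definition Ftilz (z : 'M[C]_n) (f : state) : state := fun m =>
  \sum_(a < n) \sum_(b < n) z a b * Ftil a b f m.

Definition areaOp (f : state) : state := fun m =>
  \sum_(a < n) 2%:R^-1 * (Eop a a f m - f m).

(* orthogonal projection onto the eigenspace of areaOp with eigenvalue J:
   keeps exactly the components along basis vectors lying in that eigenspace *)
Definition PiJ (J : nat) (f : state) : state := fun m =>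
  if excluded_middle_informative
       (areaOp (ket_basis m) = (fun m' => J%:R * ket_basis m m'))
  then f m else 0.

Definition norm2_box (f : state) (N : nat) : C :=
  \sum_(p : {ffun 'I_n -> 'I_N} * {ffun 'I_n -> 'I_N})
     `|f ([ffun i => val (p.1 i)], [ffun i => val (p.2 i)])| ^+ 2.

(* coherent-state ket |zeta>: psi is the coefficientwise limit of the
   partial sums  det(1 - zeta^* zeta)^{1/2} sum_{k<K} (1/k!) (1/2 F~_zeta)^k |0> *)
Definition adjmx (p q : nat) (z : 'M[C]_(p, q)) : 'M[C]_(q, p) :=
  (map_mx Num.conj z)^T.

Definition exp_partial (z : 'M[C]_n) (K : nat) : state := fun m =>
  sqrtC (\det (1%:M - adjmx z *m z)) *
  \sum_(k < K) (k`!)%:R^-1 * iter k (fun g => fun m' => 2%:R^-1 * Ftilz z g m') vac m.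

Definition is_ket_zeta (z : 'M[C]_n) (psi : state) : Prop :=
  forall m, exists K, forall K', (K <= K')%N -> psi m = exp_partial z K' m.

Definition in_Omega (z : 'M[C]_n) : Prop :=
  z^T = - z /\
  forall v : 'cV[C]_n, v != 0 ->
    0 < ((adjmx v) *m (1%:M - adjmx z *m z) *m v) ord0 ord0.

End Fock.

(* An antisymmetric matrix of rank 2 factors as zeta = U J U^T with U an n x 2 matrix and
   J the symplectic form; with d = det (U^* U) this gives zeta zeta^* zeta = d zeta,
   tr (zeta^* zeta) = 2 d and det (1 - zeta^* zeta) = (1 - d)^2.
   Let K = 1/2 F~_zeta = sum zeta_ab B_a^+ A_b^+ and K' its adjoint. Each application of K
   raises the area by one, so Pi_J |zeta> = det (1 - zeta^* zeta)^(1/2) K^J |0> / J!.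
   The commutator [K', K] = tr (zeta^* zeta) + N_A + N_B, with [N_A + N_B, K] = 2 d K by the
   cubic identity, gives K' K^(J+1) |0> = d (J+1) (J+2) K^J |0>, hence
   |K^J |0>|^2 = d^J J! (J+1)!. Norms are computed on a box of occupation numbers large
   enough to contain the finite support of K^J |0>. *)

From Pilot Require Import Defs.
From mathcomp Require Import all_boot all_order all_algebra.
From mathcomp Require Import ring.
From Stdlib Require Import FunctionalExtensionality ClassicalEpsilon.
Import Order.TTheory GRing.Theory Num.Theory.
Local Open Scope ring_scope.
Set Implicit Arguments. Unset Strict Implicit. Unset Printing Implicit Defensive.

(* The symplectic form [[0, 1], [-1, 0]]. *)
Definition symp2 {R : pzRingType} : 'M[R]_2 := \matrix_(i, j) (j%:R - i%:R).

Lemma ord2P (i : 'I_2) : i = ord0 \/ i = ord_max.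
Proof. by case: i => [[|[|//]] ?]; [left | right]; apply: val_inj. Qed.

Lemma lift0_ord2 : lift ord0 ord0 = ord_max :> 'I_2. Proof. exact: val_inj. Qed.
Lemma lift_max_ord2 : lift ord_max ord0 = ord0 :> 'I_2. Proof. exact: val_inj. Qed.

Lemma adj_mx2 (R : comPzRingType) (M : 'M[R]_2) : \adj M = symp2^T *m M^T *m symp2.
Proof.
apply/matrixP => i j; rewrite !mxE /cofactor det_mx11 !mxE.
rewrite !big_ord_recl !big_ord0 !mxE !big_ord_recl !big_ord0 !mxE.
by case: (ord2P i) => ->; case: (ord2P j) => ->; rewrite ?lift0_ord2 ?lift_max_ord2 /=; ring.
Qed.

Lemma symp2_formE (R : comPzRingType) m n (U : 'M[R]_(m, 2)) (V : 'M[R]_(n, 2)) k l :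
  (U *m symp2 *m V^T) k l = U k ord0 * V l ord_max - U k ord_max * V l ord0.
Proof.
rewrite !mxE !big_ord_recl !big_ord0 !mxE !big_ord_recl !big_ord0 !mxE lift0_ord2 /= /bump /=.
ring.
Qed.

Lemma det1B_mulmxC (R : comPzRingType) m n (A : 'M[R]_(m, n)) (B : 'M[R]_(n, m)) :
  \det (1%:M - A *m B) = \det (1%:M - B *m A).
Proof.
have E1 : block_mx 1%:M A B 1%:M = block_mx 1%:M 0 B 1%:M *m block_mx 1%:M A 0 (1%:M - B *m A).
  by rewrite mulmx_block !mul1mx !mulmx0 !mul0mx ?addr0 ?add0r ?mulmx1 addrC subrK.
have E2 : block_mx 1%:M A B 1%:M = block_mx (1%:M - A *m B) A 0 1%:M *m block_mx 1%:M 0 B 1%:M.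
  by rewrite mulmx_block !mul1mx !mulmx0 !mul0mx ?addr0 ?add0r ?mulmx1 subrK.
have := congr1 determinant E1.
by rewrite E2 !det_mulmx (det_lblock (1%:M : 'M_m)) !det_ublock !det1 !mul1r ?mulr1.
Qed.

Section Adjoint.
Variable C : numClosedFieldType.

Lemma adjmxM m n p (A : 'M[C]_(m, n)) (B : 'M[C]_(n, p)) :
  adjmx (A *m B) = adjmx B *m adjmx A.
Proof. by rewrite /adjmx map_mxM trmx_mul. Qed.

Lemma adjmx_tr m n (A : 'M[C]_(m, n)) : adjmx A^T = map_mx Num.conj A.
Proof. by rewrite /adjmx map_trmx trmxK. Qed.

Lemma adjmx_symp2 : adjmx symp2 = symp2^T :> 'M[C]_2.
Proof.
by congr _^T; apply/matrixP => i j; rewrite !mxE rmorphB /= !conjC_nat.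
Qed.

Lemma mxtrace_adjmx_mul m n (A : 'M[C]_(m, n)) :
  \tr (adjmx A *m A) = \sum_(i < m) \sum_(j < n) `|A i j| ^+ 2.
Proof.
rewrite /mxtrace exchange_big; apply: eq_bigr => j _; rewrite !mxE.
by apply: eq_bigr => i _; rewrite !mxE mulrC normCK.
Qed.

Lemma trmx_adjmx_mul m n (A : 'M[C]_(m, n)) : (adjmx A *m A)^T = A^T *m map_mx Num.conj A.
Proof. by rewrite trmx_mul /adjmx trmxK. Qed.

End Adjoint.

Section SkewRank2.
Variables (C : numClosedFieldType) (n : nat) (U : 'M[C]_(n, 2)).
Let z := U *m symp2 *m U^T.
Let G := adjmx U *m U.

Lemma adjmx_skew2_mul : adjmx z *m z = map_mx Num.conj U *m \adj G^T *m U^T.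
Proof.
rewrite /z !adjmxM adjmx_tr adjmx_symp2 adj_mx2 trmxK -/G.
by rewrite !mulmxA.
Qed.

Lemma skew2_cube : z *m adjmx z *m z = \det G *: z.
Proof.
rewrite -mulmxA adjmx_skew2_mul /z !mulmxA -[_ *m U^T *m _]mulmxA -trmx_adjmx_mul -/G.
rewrite -[_ *m G^T *m _]mulmxA mul_mx_adj det_tr.
by rewrite mul_mx_scalar !scalemxAl.
Qed.

Lemma mxtrace_skew2 : \tr (adjmx z *m z) = \det G *+ 2.
Proof.
rewrite adjmx_skew2_mul -mulmxA mxtrace_mulC -mulmxA -trmx_adjmx_mul -/G.
by rewrite mul_adj_mx det_tr mxtrace_scalar.
Qed.

Lemma det_skew2 : \det (1%:M - adjmx z *m z) = (1 - \det G) ^+ 2.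
Proof.
rewrite adjmx_skew2_mul -mulmxA det1B_mulmxC -mulmxA -trmx_adjmx_mul -/G.
by rewrite mul_adj_mx det_tr -(raddfB (@scalar_mx C 2)) det_scalar.
Qed.

Lemma det_skew2_ge0 : 0 <= \det (1%:M - adjmx z *m z).
Proof.
have G2_ge0 : 0 <= \det G *+ 2.
  rewrite -mxtrace_skew2 mxtrace_adjmx_mul sumr_ge0 // => i _.
  by rewrite sumr_ge0 // => j _; rewrite exprn_ge0.
rewrite det_skew2 -realEsqr rpredB ?rpred1 // ger0_real //.
by rewrite -(pmulrn_lge0 _ (isT : (0 < 2)%N)).
Qed.

End SkewRank2.

Lemma sum_delta (R : pzSemiRingType) (I : finType) (F : I -> R) i :
  \sum_(l : I) (l == i)%:R * F l = F i.
Proof.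
rewrite (bigD1 i) //= eqxx mul1r big1 ?addr0 // => l /negbTE ->; exact: mul0r.
Qed.

Lemma skew_rank2_factor (R : numFieldType) n (z : 'M[R]_n) :
  z^T = - z -> \rank z = 2%N -> exists U : 'M_(n, 2), z = U *m symp2 *m U^T.
Proof.
move=> zT rz.
have zA k l : z l k = - z k l by move/matrixP: zT => /(_ k l); rewrite !mxE.
have z0 k : z k k = 0.
  have : z k k *+ 2 = 0 by rewrite mulr2n {1}zA addNr.
  by move/eqP; rewrite mulrn_eq0 => /eqP.
have [[i j] /= nz | all0] := pickP (fun p : 'I_n * 'I_n => z p.1 p.2 != 0); last first.
  suff z_eq0 : z = 0 by move: rz; rewrite z_eq0 mxrank0.
  by apply/matrixP => k l; have := all0 (k, l); rewrite /= mxE => /negbFE/eqP.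
set c := z i j.
(* Rows i and j of z span its row space, as the minor on {i, j} is invertible. *)
pose ij (r : 'I_2) := if r == ord0 then i else j.
pose Rij := \matrix_(r, k) z (ij r) k.
pose W := \matrix_(k, s) ((k == ij (rev_ord s))%:R * (if s == ord0 then c^-1 else - c^-1)).
have RW : Rij *m W = 1%:M.
  apply/matrixP => r s; rewrite !mxE.
  under eq_bigr do rewrite !mxE mulrCA.
  rewrite sum_delta.
  by case: (ord2P r) => ->; case: (ord2P s) => ->;
    rewrite /ij /= ?z0 ?mul0r // ?(zA i j) ?mulrNN mulfV.
have rRij : \rank Rij = 2%N.
  by apply/anti_leq; rewrite rank_leq_row /= -{1}(mxrank1 R 2) -RW mxrankM_maxl.
have Rij_z : (Rij <= z)%MS.
  apply/submxP; exists (\matrix_(r, l) (l == ij r)%:R).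
  by apply/matrixP => r k; rewrite !mxE; under eq_bigr do rewrite !mxE; rewrite sum_delta.
have z_Rij : (z <= Rij)%MS by rewrite -(mxrank_leqif_sup Rij_z).2 rRij rz.
exists (\matrix_(k, s) (if s == ord0 then z k j / c else z i k)).
apply/matrixP => l k; rewrite symp2_formE !mxE /=.
have /submxP [D HD] : (row l z <= Rij)%MS := submx_trans (row_sub l z) z_Rij.
have zlE k' : z l k' = D 0 ord0 * z i k' + D 0 ord_max * z j k'.
  move/matrixP: HD => /(_ 0 k'); rewrite !mxE => ->.
  by rewrite !big_ord_recl big_ord0 !mxE lift0_ord2 addr0.
have zli := zlE i; have zlj := zlE j.
rewrite z0 mulr0 addr0 in zlj; rewrite (zA i j) z0 mulr0 add0r in zli.
rewrite zlE (zA l i) (zA k j) zli.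
have -> : D 0 ord0 = z l j / c by rewrite zlj mulfK.
by rewrite /c; field.
Qed.

Section MatrixPairing.
Variables (R : comPzRingType) (n : nat).
Implicit Types (M N : 'M[R]_n) (X Y : 'I_n -> 'I_n -> R).

(* In [mxpair_deltaIJ] below, the Kronecker delta identifies the I-th index of M
   with the J-th index of N. *)
Definition mxpair M X := \sum_(i < n) \sum_(j < n) M i j * X i j.

Lemma eq_mxpair M X Y : (forall i j, X i j = Y i j) -> mxpair M X = mxpair M Y.
Proof. by move=> XY; apply: eq_bigr => i _; apply: eq_bigr => j _; rewrite XY. Qed.

Lemma mxpair0 M : mxpair M (fun _ _ => 0) = 0.
Proof. by rewrite /mxpair big1 // => i _; rewrite big1 // => j _; rewrite mulr0. Qed.

Lemma mxpairD M X Y : mxpair M (fun i j => X i j + Y i j) = mxpair M X + mxpair M Y.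
Proof.
rewrite /mxpair -big_split; apply: eq_bigr => i _.
by rewrite -big_split; apply: eq_bigr => j _; rewrite mulrDr.
Qed.

Lemma mxpairZ k M X : mxpair (k *: M) X = k * mxpair M X.
Proof.
rewrite /mxpair mulr_sumr; apply: eq_bigr => i _.
by rewrite mulr_sumr; apply: eq_bigr => j _; rewrite mxE mulrA.
Qed.

Lemma exchange_big2 (F : 'I_n -> 'I_n -> 'I_n -> 'I_n -> R) :
  \sum_(a < n) \sum_(b < n) \sum_(c < n) \sum_(d < n) F a b c d =
  \sum_(c < n) \sum_(d < n) \sum_(a < n) \sum_(b < n) F a b c d.
Proof.
under eq_bigr do rewrite exchange_big.
rewrite exchange_big; apply: eq_bigr => c _.
under eq_bigr do rewrite exchange_big.
by rewrite exchange_big.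
Qed.

Lemma mulr_mxpair k M X : k * mxpair M X = mxpair M (fun i j => k * X i j).
Proof.
rewrite /mxpair mulr_sumr; apply: eq_bigr => i _.
by rewrite mulr_sumr; apply: eq_bigr => j _; rewrite mulrCA.
Qed.

Lemma mxpairC M N (T : 'I_n -> 'I_n -> 'I_n -> 'I_n -> R) :
  mxpair M (fun a b => mxpair N (T a b)) = mxpair N (fun c d => mxpair M (fun a b => T a b c d)).
Proof.
rewrite /mxpair; under eq_bigr do under eq_bigr do rewrite -/(mxpair N _) mulr_mxpair.
under [RHS]eq_bigr do under eq_bigr do rewrite -/(mxpair M _) mulr_mxpair.
by rewrite exchange_big2; do 4 (apply: eq_bigr => ? _); rewrite mulrCA.
Qed.

Lemma mxpair_delta_row N a Y :
  mxpair N (fun c d => (c == a)%:R * Y c d) = \sum_(d < n) N a d * Y a d.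
Proof.
rewrite /mxpair; under eq_bigr do under eq_bigr do rewrite mulrCA.
by rewrite exchange_big; apply: eq_bigr => d _; rewrite sum_delta.
Qed.

Lemma mxpair_delta_col N b Y :
  mxpair N (fun c d => (d == b)%:R * Y c d) = \sum_(c < n) N c b * Y c b.
Proof.
by rewrite /mxpair; apply: eq_bigr => c _; under eq_bigr do rewrite mulrCA; rewrite sum_delta.
Qed.

Lemma mxpair_delta11 M N X :
  mxpair M (fun a b => mxpair N (fun c d => (c == a)%:R * X b d)) = mxpair (M^T *m N) X.
Proof.
rewrite {1}/mxpair; under eq_bigr do under eq_bigr do rewrite mxpair_delta_row.
rewrite /mxpair exchange_big; apply: eq_bigr => b _.
under eq_bigr do rewrite mulr_sumr.
rewrite exchange_big; apply: eq_bigr => d _.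
by rewrite !mxE mulr_suml; apply: eq_bigr => a _; rewrite !mxE mulrA.
Qed.

Lemma mxpair_delta22 M N X :
  mxpair M (fun a b => mxpair N (fun c d => (d == b)%:R * X c a)) = mxpair (N *m M^T) X.
Proof.
rewrite {1}/mxpair; under eq_bigr do under eq_bigr do rewrite mxpair_delta_col mulr_sumr.
under eq_bigr do rewrite exchange_big.
rewrite /mxpair exchange_big; apply: eq_bigr => c _; apply: eq_bigr => a _.
by rewrite !mxE mulr_suml; apply: eq_bigr => b _; rewrite !mxE mulrCA mulrA.
Qed.

Lemma mxpair_delta12 M N X :
  mxpair M (fun a b => mxpair N (fun c d => (d == a)%:R * X c b)) = mxpair (N *m M) X.
Proof.
rewrite {1}/mxpair; under eq_bigr do under eq_bigr do rewrite mxpair_delta_col mulr_sumr.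
under eq_bigr do rewrite exchange_big.
rewrite /mxpair exchange_big; apply: eq_bigr => c _; rewrite exchange_big.
apply: eq_bigr => b _; rewrite !mxE mulr_suml.
by apply: eq_bigr => a _; rewrite mulrCA mulrA.
Qed.

Lemma mxpair_delta21 M N X :
  mxpair M (fun a b => mxpair N (fun c d => (c == b)%:R * X a d)) = mxpair (M *m N) X.
Proof.
rewrite {1}/mxpair; under eq_bigr do under eq_bigr do rewrite mxpair_delta_row mulr_sumr.
rewrite /mxpair; apply: eq_bigr => a _; rewrite exchange_big; apply: eq_bigr => d _.
by rewrite !mxE mulr_suml; apply: eq_bigr => b _; rewrite mulrA.
Qed.

Lemma mxpair_diag M x : mxpair M (fun i j => (j == i)%:R * x) = \tr M * x.
Proof.
rewrite /mxtrace mulr_suml; apply: eq_bigr => i _.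
by under eq_bigr do rewrite mulrCA; rewrite sum_delta.
Qed.

End MatrixPairing.

Section Occupations.
Variable n : nat.
Implicit Types (f : {ffun 'I_n -> nat}) (a b : 'I_n).

Lemma bumpE f a i : Defs.bump f a i = (f i + (i == a))%N.
Proof. by rewrite ffunE. Qed.

Lemma unbumpE f a i : Defs.unbump f a i = (f i - (i == a))%N.
Proof. by rewrite ffunE. Qed.

Lemma bumpK f a : Defs.unbump (Defs.bump f a) a = f.
Proof. by apply/ffunP => i; rewrite unbumpE bumpE addnK. Qed.

Lemma unbumpK f a : (0 < f a)%N -> Defs.bump (Defs.unbump f a) a = f.
Proof.
move=> fa; apply/ffunP => i; rewrite bumpE unbumpE.
by case: eqP => [->|_]; rewrite ?subn0 ?addn0 // subnK.
Qed.

Lemma bump_neq f a b : a != b -> Defs.bump f a b = f b.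
Proof. by rewrite bumpE eq_sym => /negbTE ->; rewrite addn0. Qed.

Lemma unbump_neq f a b : a != b -> Defs.unbump f a b = f b.
Proof. by rewrite unbumpE eq_sym => /negbTE ->; rewrite subn0. Qed.

Lemma bump_unbumpC f a b : a != b ->
  Defs.bump (Defs.unbump f b) a = Defs.unbump (Defs.bump f a) b.
Proof.
move=> ab; apply/ffunP => i; rewrite !ffunE.
by have [->|ia] := eqVneq i a; rewrite ?(negbTE ab) ?subn0 ?addn0.
Qed.

Lemma unbumpC f a b : Defs.unbump (Defs.unbump f a) b = Defs.unbump (Defs.unbump f b) a.
Proof. by apply/ffunP => i; rewrite !unbumpE -!subnDA addnC. Qed.

Definition occ_total f := (\sum_(i < n) f i)%N.

Lemma occ_total_bump f a : occ_total (Defs.bump f a) = (occ_total f).+1.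
Proof.
rewrite /occ_total (eq_bigr (fun i => f i + (i == a))%N) => [|i _]; last by rewrite ffunE.
rewrite big_split /= -addn1; congr (_ + _)%N.
by rewrite (bigD1 a) //= eqxx big1 // => i /negbTE ->.
Qed.

Lemma occ_total_unbump f a : (0 < f a)%N -> occ_total f = (occ_total (Defs.unbump f a)).+1.
Proof. by move=> fa; rewrite -(occ_total_bump _ a) unbumpK. Qed.

Lemma occ_le_total f i : (f i <= occ_total f)%N.
Proof. by rewrite /occ_total (bigD1 i) //= leq_addr. Qed.

End Occupations.

Section Fock.
Variables (C : numClosedFieldType) (n : nat).
Local Notation state := (state C n).
Implicit Types (f g : state) (m : occ n) (a b c d e : 'I_n).

(* Exchanging the two families of modes turns the A-operators into the B-operators;
   the B-versions of the commutation relations are transported along it. *)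
Definition swap_modes f : state := fun m => f (m.2, m.1).

Definition weighted_shift (op : state -> state) :=
  exists (w : occ n -> C) (s : occ n -> occ n), forall f m, op f m = w m * f (s m).

Lemma Adag_shift a : weighted_shift (Adag a).
Proof.
exists (fun m => if (0 < m.1 a)%N then sqrtC (m.1 a)%:R else 0),
       (fun m => (Defs.unbump m.1 a, m.2)) => f m.
by rewrite /Adag; case: ifP; rewrite ?mul0r.
Qed.

Lemma Bdag_shift a : weighted_shift (Bdag a).
Proof.
exists (fun m => if (0 < m.2 a)%N then sqrtC (m.2 a)%:R else 0),
       (fun m => (m.1, Defs.unbump m.2 a)) => f m.
by rewrite /Bdag; case: ifP; rewrite ?mul0r.
Qed.

Lemma Aop_shift a : weighted_shift (Aop a).
Proof. by exists (fun m => sqrtC (m.1 a).+1%:R), (fun m => (Defs.bump m.1 a, m.2)). Qed.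

Lemma Bop_shift a : weighted_shift (Bop a).
Proof. by exists (fun m => sqrtC (m.2 a).+1%:R), (fun m => (m.1, Defs.bump m.2 a)). Qed.

Section WeightedShift.
Variables (op : state -> state) (op_shift : weighted_shift op).

Lemma shiftD f g : op (fun m => f m + g m) = fun m => op f m + op g m.
Proof. by case: op_shift => w [s opE]; apply: functional_extensionality => m; rewrite !opE mulrDr. Qed.

Lemma shiftZ k f : op (fun m => k * f m) = fun m => k * op f m.
Proof. by case: op_shift => w [s opE]; apply: functional_extensionality => m; rewrite !opE mulrCA. Qed.

Lemma shift0 : op (fun _ => 0) = fun _ => 0.
Proof. by case: op_shift => w [s opE]; apply: functional_extensionality => m; rewrite opE mulr0. Qed.

Lemma shift_mxpair (M : 'M[C]_n) (F : 'I_n -> 'I_n -> state) m :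
  op (fun m => mxpair M (fun i j => F i j m)) m = mxpair M (fun i j => op (F i j) m).
Proof.
case: op_shift => w [s opE]; rewrite !opE /mxpair mulr_sumr; apply: eq_bigr => i _.
by rewrite mulr_sumr; apply: eq_bigr => j _; rewrite opE mulrCA.
Qed.

End WeightedShift.

Lemma shift_comp op1 op2 :
  weighted_shift op1 -> weighted_shift op2 -> weighted_shift (fun f => op1 (op2 f)).
Proof.
case=> w1 [s1 op1E] [w2 [s2 op2E]].
by exists (fun m => w1 m * w2 (s1 m)), (fun m => s2 (s1 m)) => f m; rewrite op1E op2E mulrA.
Qed.

Lemma sqrtC_nat_mul k : sqrtC (k%:R : C) * sqrtC k%:R = k%:R.
Proof. by rewrite -expr2 sqrtCK. Qed.

Lemma Aop_Adag a b f :
  Aop a (Adag b f) = fun m => Adag b (Aop a f) m + (a == b)%:R * f m.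
Proof.
apply: functional_extensionality => -[m1 m2]; rewrite /Aop /Adag /=.
have [<-|ab] := eqVneq a b; last first.
  rewrite bump_neq // unbump_neq 1?eq_sym // bump_unbumpC // mul0r addr0.
  by case: ifP => _; rewrite ?mulr0 // mulrCA.
rewrite bumpE eqxx addn1 /= bumpK mulrA sqrtC_nat_mul.
have [->|m1a] := posnP (m1 a); first by rewrite add0r.
rewrite unbumpE eqxx subn1 unbumpK // mulrA prednK // sqrtC_nat_mul.
by rewrite mul1r -natr1 mulrDl mul1r.
Qed.

Lemma Bop_Bdag a b f :
  Bop a (Bdag b f) = fun m => Bdag b (Bop a f) m + (a == b)%:R * f m.
Proof.
apply: functional_extensionality => -[m1 m2].
exact (congr1 (fun F => F (m2, m1)) (Aop_Adag a b (swap_modes f))).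
Qed.

Lemma Aop_BdagC a b f : Aop a (Bdag b f) = Bdag b (Aop a f).
Proof.
apply: functional_extensionality => m; rewrite /Aop /Bdag /=.
by case: ifP => _; rewrite ?mulr0 // mulrCA.
Qed.

Lemma Bop_AdagC a b f : Bop a (Adag b f) = Adag b (Bop a f).
Proof.
apply: functional_extensionality => -[m1 m2].
exact (congr1 (fun F => F (m2, m1)) (Aop_BdagC a b (swap_modes f))).
Qed.

Lemma Adag_BdagC a b f : Adag a (Bdag b f) = Bdag b (Adag a f).
Proof.
apply: functional_extensionality => m; rewrite /Adag /Bdag /=.
by do 2 case: ifP => _; rewrite ?mulr0 // mulrCA.
Qed.

Lemma AdagC a b f : Adag a (Adag b f) = Adag b (Adag a f).
Proof.
have [<-//|ab] := eqVneq a b.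
apply: functional_extensionality => m; rewrite /Adag /=.
rewrite unbump_neq // unbump_neq 1?eq_sym // unbumpC.
by do 2 case: ifP => _; rewrite ?mulr0 // mulrCA.
Qed.

Lemma BdagC a b f : Bdag a (Bdag b f) = Bdag b (Bdag a f).
Proof.
apply: functional_extensionality => -[m1 m2].
exact (congr1 (fun F => F (m2, m1)) (AdagC a b (swap_modes f))).
Qed.

Lemma Adag_Aop a f : Adag a (Aop a f) = fun m => (m.1 a)%:R * f m.
Proof.
apply: functional_extensionality => -[m1 m2]; rewrite /Adag /Aop /=.
have [->|m1a] := posnP (m1 a); first by rewrite mul0r.
by rewrite unbumpE eqxx subn1 prednK // unbumpK // mulrA sqrtC_nat_mul.
Qed.

Lemma Bdag_Bop a f : Bdag a (Bop a f) = fun m => (m.2 a)%:R * f m.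
Proof.
apply: functional_extensionality => -[m1 m2].
exact (congr1 (fun F => F (m2, m1)) (Adag_Aop a (swap_modes f))).
Qed.

Lemma Aop_Bop_Bdag_Adag a b c d f :
  Aop b (Bop a (Bdag c (Adag d f))) = fun m =>
    Bdag c (Adag d (Aop b (Bop a f))) m + (c == a)%:R * Adag d (Aop b f) m
    + (d == b)%:R * Bdag c (Bop a f) m + (c == a)%:R * ((d == b)%:R * f m).
Proof.
rewrite Bop_Bdag (shiftD (Aop_shift b)) (shiftZ (Aop_shift b)).
rewrite Bop_AdagC Aop_BdagC !Aop_Adag (shiftD (Bdag_shift c)) (shiftZ (Bdag_shift c)).
by apply: functional_extensionality => m; rewrite (eq_sym a c) (eq_sym b d); ring.
Qed.

Lemma Adag_Aop_Bdag_Adag b c d e f :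
  Adag d (Aop b (Bdag c (Adag e f))) = fun m =>
    Bdag c (Adag e (Adag d (Aop b f))) m + (e == b)%:R * Bdag c (Adag d f) m.
Proof.
rewrite Aop_BdagC Aop_Adag (shiftD (Bdag_shift c)) (shiftZ (Bdag_shift c)).
by rewrite (shiftD (Adag_shift d)) (shiftZ (Adag_shift d)) !Adag_BdagC AdagC eq_sym.
Qed.

Lemma Bdag_Bop_Bdag_Adag a c d e f :
  Bdag c (Bop a (Bdag e (Adag d f))) = fun m =>
    Bdag e (Adag d (Bdag c (Bop a f))) m + (e == a)%:R * Bdag c (Adag d f) m.
Proof.
rewrite Bop_Bdag Bop_AdagC (shiftD (Bdag_shift c)) (shiftZ (Bdag_shift c)) BdagC.
by rewrite -Adag_BdagC eq_sym.
Qed.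

Lemma areaOpE f m : areaOp f m = 2%:R^-1 * (occ_total m.1 + occ_total m.2)%:R * f m.
Proof.
rewrite /areaOp (eq_bigr (fun a => 2%:R^-1 * f m * (m.1 a + m.2 a)%:R)) => [|a _].
  by rewrite -mulr_sumr -natr_sum big_split /=; ring.
by rewrite /Eop Adag_Aop Bdag_Bop eqxx natrD mulr1n; ring.
Qed.

Lemma half_natr_eq k J : (2%:R^-1 * k%:R == J%:R :> C) = (k == 2 * J)%N.
Proof.
have two0 : (2%:R : C) != 0 by rewrite pnatr_eq0.
by rewrite -(inj_eq (mulfI two0)) mulrA mulfV // mul1r -natrM eqr_nat.
Qed.

Lemma PiJE J f m : PiJ J f m = if (occ_total m.1 + occ_total m.2 == 2 * J)%N then f m else 0.
Proof.
rewrite /PiJ -half_natr_eq; case: excluded_middle_informative => [eigen | not_eigen].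
  have := congr1 (fun F => F m) eigen; rewrite /= areaOpE /ket_basis eqxx !mulr1 => ->.
  by rewrite eqxx.
case: eqP => // lam_m; case: not_eigen; apply: functional_extensionality => m'.
by rewrite areaOpE /ket_basis; case: eqP => [->|_]; rewrite ?lam_m // !mulr0.
Qed.

Lemma conjC_sqrtC_nat k : (sqrtC (k%:R : C))^* = sqrtC k%:R.
Proof. by apply: geC0_conj; rewrite sqrtC_ge0 ler0n. Qed.

Section Box.
Variable N : nat.

Definition box := ({ffun 'I_n -> 'I_N} * {ffun 'I_n -> 'I_N})%type.
Definition box_occ (p : box) : occ n := ([ffun i => val (p.1 i)], [ffun i => val (p.2 i)]).
Definition in_box m := [forall i, m.1 i < N]%N && [forall i, m.2 i < N]%N.
Definition box_supported f := forall m, ~~ in_box m -> f m = 0.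
Definition box_dot f g := \sum_(p : box) (f (box_occ p))^* * g (box_occ p).

Lemma box_occ_in p : in_box (box_occ p).
Proof. by apply/andP; split; apply/forallP => i; rewrite ffunE ltn_ord. Qed.

Lemma box_occ_inj : injective box_occ.
Proof.
move=> [p1 p2] [q1 q2] [/ffunP E1 /ffunP E2].
by congr (_, _); apply/ffunP => i; apply: val_inj; [have := E1 i | have := E2 i]; rewrite !ffunE.
Qed.

Lemma sum_box_occ m (F : occ n -> C) :
  \sum_(q : box) (box_occ q == m)%:R * F (box_occ q) = if in_box m then F m else 0.
Proof.
case: ifP => [/andP[/forallP m1N /forallP m2N] | m_out]; last first.
  rewrite big1 // => q _; suff /negbTE -> : box_occ q != m by rewrite mul0r.
  by apply: contraFN m_out => /eqP <-; exact: box_occ_in.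
pose q0 : box := ([ffun i => Ordinal (m1N i)], [ffun i => Ordinal (m2N i)]).
have q0E : box_occ q0 = m.
  case: m m1N m2N @q0 => m1 m2 ? ? q0.
  by rewrite /box_occ /=; congr (_, _); apply/ffunP => i; rewrite !ffunE.
rewrite -q0E; under eq_bigr => q _ do rewrite (inj_eq box_occ_inj).
exact: sum_delta.
Qed.

Lemma in_box_unbump1 m a : in_box m -> in_box (Defs.unbump m.1 a, m.2).
Proof.
case/andP => /forallP m1N m2N; apply/andP; split => //; apply/forallP => i /=.
by rewrite ffunE (leq_ltn_trans (leq_subr _ _)).
Qed.

Lemma bump1_eq m m' a :
  (m' == (Defs.bump m.1 a, m.2)) = (0 < m'.1 a)%N && (m == (Defs.unbump m'.1 a, m'.2)).
Proof.
case: m m' => m1 m2 [m1' m2'] /=.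
apply/eqP/andP => [[-> ->]|[m1a /eqP [-> ->]]]; last by rewrite unbumpK.
by rewrite bumpK bumpE eqxx addn1.
Qed.

Lemma box_dot_Adag a h g : box_supported g -> box_dot (Adag a h) g = box_dot h (Aop a g).
Proof.
(* Both sides are sums over the pairs of box points (p, p + e_a); g vanishes when
   p + e_a leaves the box. *)
move=> g_out.
pose w m := sqrtC (m.1 a).+1%:R : C.
transitivity (\sum_(p : box) \sum_(q : box)
    (box_occ q == (Defs.bump (box_occ p).1 a, (box_occ p).2))%:R *
    (w (box_occ p) * ((h (box_occ p))^* * g (box_occ q)))); last first.
  apply: eq_bigr => p _; rewrite (sum_box_occ _ (fun m' => w (box_occ p) * (_ * g m'))).
  rewrite /Aop; case: ifP => [_ | /negbT/g_out ->]; [exact: mulrCA | by rewrite !mulr0].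
rewrite exchange_big; apply: eq_bigr => q _.
under eq_bigr do rewrite bump1_eq -mulnb natrM -mulrA.
rewrite /Adag; case: ifP => q1a; last first.
  by rewrite rmorph0 mul0r big1 // => p _; rewrite mulr0n mul0r.
under eq_bigr do rewrite mulr1n mul1r.
rewrite (sum_box_occ _ (fun m' => w m' * ((h m')^* * g (box_occ q)))).
rewrite in_box_unbump1 ?box_occ_in //= /w unbumpE eqxx subn1 prednK //.
by rewrite rmorphM /= conjC_sqrtC_nat mulrA.
Qed.

Lemma in_box_swap m : in_box (m.2, m.1) = in_box m.
Proof. exact: andbC. Qed.

Lemma box_dot_swap f g : box_dot (swap_modes f) g = box_dot f (swap_modes g).
Proof.
have swap_inj : injective (fun p : box => (p.2, p.1)) by move=> [? ?] [? ?] [-> ->].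
by rewrite /box_dot (reindex_inj swap_inj).
Qed.

Lemma box_supported_Bop a g : box_supported g -> box_supported (Bop a g).
Proof.
move=> g_out m m_out; rewrite /Bop g_out ?mulr0 //; apply: contra m_out.
case/andP => m1N /forallP m2N; apply/andP; split => //; apply/forallP => i.
by apply: leq_ltn_trans (m2N i); rewrite ffunE leq_addr.
Qed.

Lemma box_dot_Bdag a h g : box_supported g -> box_dot (Bdag a h) g = box_dot h (Bop a g).
Proof.
move=> g_out; rewrite -[Bdag a h]/(swap_modes (Adag a (swap_modes h))).
rewrite box_dot_swap box_dot_Adag ?box_dot_swap // => m.
by rewrite -in_box_swap => /g_out.
Qed.

Lemma box_dotZr f k g : box_dot f (fun m => k * g m) = k * box_dot f g.
Proof. by rewrite /box_dot mulr_sumr; apply: eq_bigr => p _; rewrite mulrCA. Qed.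

Lemma norm2_boxZ k f : norm2_box (fun m => k * f m) N = `|k| ^+ 2 * box_dot f f.
Proof.
rewrite /norm2_box /box_dot mulr_sumr; apply: eq_bigr => p _.
by rewrite normrM exprMn -normCKC mulrC.
Qed.

Lemma box_dot_mxpairl (M : 'M[C]_n) (F : 'I_n -> 'I_n -> state) g :
  box_dot (fun m => mxpair M (fun i j => F i j m)) g =
  mxpair (map_mx Num.conj M) (fun i j => box_dot (F i j) g).
Proof.
rewrite /box_dot /mxpair; under eq_bigr do rewrite rmorph_sum mulr_suml.
rewrite exchange_big; apply: eq_bigr => i _.
under eq_bigr do rewrite rmorph_sum mulr_suml.
rewrite exchange_big; apply: eq_bigr => j _; rewrite mulr_sumr mxE.
by apply: eq_bigr => p _; rewrite rmorphM mulrA.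
Qed.

Lemma box_dot_mxpairr (M : 'M[C]_n) f (F : 'I_n -> 'I_n -> state) :
  box_dot f (fun m => mxpair M (fun i j => F i j m)) = mxpair M (fun i j => box_dot f (F i j)).
Proof.
rewrite /box_dot /mxpair; under eq_bigr do rewrite mulr_sumr.
rewrite exchange_big; apply: eq_bigr => i _.
under eq_bigr do rewrite mulr_sumr.
rewrite exchange_big; apply: eq_bigr => j _; rewrite mulr_sumr.
by apply: eq_bigr => p _; rewrite mulrCA.
Qed.

End Box.

Section Ladder.
Variable z : 'M[C]_n.

(* [raise] is K = 1/2 F~_z for antisymmetric z (see [half_Ftilz]); [lower] is its adjoint. *)
Definition raise f : state := fun m => mxpair z (fun a b => Bdag a (Adag b f) m).
Definition lower f : state := fun m => mxpair (map_mx Num.conj z) (fun a b => Aop b (Bop a f) m).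
Definition numA f : state := fun m => mxpair (adjmx z *m z) (fun b d => Adag d (Aop b f) m).
Definition numB f : state := fun m => mxpair (z *m adjmx z) (fun c a => Bdag c (Bop a f) m).

Lemma shift2_mxpair op1 op2 : weighted_shift op1 -> weighted_shift op2 ->
  forall (M : 'M[C]_n) (F : 'I_n -> 'I_n -> state) m,
  op1 (op2 (fun m => mxpair M (fun i j => F i j m))) m = mxpair M (fun i j => op1 (op2 (F i j)) m).
Proof. by move=> s1 s2 M F m; rewrite (shift_mxpair (shift_comp s1 s2)). Qed.

Lemma raiseD f g : raise (fun m => f m + g m) = fun m => raise f m + raise g m.
Proof.
apply: functional_extensionality => m; rewrite /raise -mxpairD; apply: eq_mxpair => a b.
by rewrite (shiftD (Adag_shift b)) (shiftD (Bdag_shift a)).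
Qed.

Lemma raiseZ k f : raise (fun m => k * f m) = fun m => k * raise f m.
Proof.
apply: functional_extensionality => m; rewrite /raise mulr_mxpair; apply: eq_mxpair => a b.
by rewrite (shiftZ (Adag_shift b)) (shiftZ (Bdag_shift a)).
Qed.

Lemma lower_raise f : lower (raise f) = fun m =>
  raise (lower f) m + numA f m + numB f m + \tr (adjmx z *m z) * f m.
Proof.
apply: functional_extensionality => m; rewrite {1}/lower.
under eq_mxpair => a b do rewrite (shift2_mxpair (Aop_shift b) (Bop_shift a)).
under eq_mxpair => a b do under eq_mxpair => c d do rewrite Aop_Bop_Bdag_Adag.
under eq_mxpair => a b do rewrite !mxpairD.
rewrite !mxpairD mxpair_delta22 mxpair_delta11 mxpair_delta11 mxpair_diag mxpairC.
congr (_ + _ + _ + _) => //.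
by rewrite /raise; apply: eq_mxpair => c d; rewrite (shift2_mxpair (Bdag_shift c) (Adag_shift d)).
Qed.

Lemma raise0 : raise (fun _ => 0) = fun _ => 0.
Proof.
apply: functional_extensionality => m; rewrite /raise /mxpair big1 // => a _.
by rewrite big1 // => b _; rewrite (shift0 (shift_comp (Bdag_shift a) (Adag_shift b))) mulr0.
Qed.

Lemma Aop_vac a : Aop a (@vac C n) = fun _ => 0.
Proof.
apply: functional_extensionality => m; rewrite /Aop /vac.
case: eqP => [[/ffunP /(_ a)]|]; last by rewrite mulr0.
by rewrite !ffunE eqxx addn1.
Qed.

Lemma Bop_vac a : Bop a (@vac C n) = fun _ => 0.
Proof.
apply: functional_extensionality => m; rewrite /Bop /vac.
case: eqP => [[_ /ffunP /(_ a)]|]; last by rewrite mulr0.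
by rewrite !ffunE eqxx addn1.
Qed.

Lemma lower_vac : lower (@vac C n) = fun _ => 0.
Proof.
apply: functional_extensionality => m; rewrite /lower -[RHS](mxpair0 (map_mx Num.conj z)).
by apply: eq_mxpair => a b; rewrite Bop_vac (shift0 (Aop_shift b)).
Qed.

Lemma numA_vac m : numA (@vac C n) m = 0.
Proof.
rewrite /numA -(mxpair0 (adjmx z *m z)).
by apply: eq_mxpair => b a; rewrite Aop_vac (shift0 (Adag_shift a)).
Qed.

Lemma numB_vac m : numB (@vac C n) m = 0.
Proof.
rewrite /numB -(mxpair0 (z *m adjmx z)).
by apply: eq_mxpair => c a; rewrite Bop_vac (shift0 (Bdag_shift c)).
Qed.

Definition raise_vac k : state := iter k raise (@vac C n).

Lemma raise_vac_eq0 k m :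
  ~~ ((occ_total m.1 == k) && (occ_total m.2 == k)) -> raise_vac k m = 0.
Proof.
elim: k m => [|k IH] m m_out.
  rewrite /raise_vac /= /vac; case: eqP => [m0|_] //; move: m_out.
  by rewrite m0 /occ_total /= !big1 // => i _; rewrite ffunE.
rewrite /raise_vac iterS -/(raise_vac k) /raise -(mxpair0 z); apply: eq_mxpair => a b.
rewrite /Bdag /Adag /=; case: ifP => m2a //; case: ifP => m1b; last by rewrite mulr0.
rewrite IH ?mulr0 //=; apply: contra m_out => /andP [/eqP t1 /eqP t2].
by rewrite (occ_total_unbump m1b) (occ_total_unbump m2a) t1 t2 !eqxx.
Qed.

Lemma raise_vac_box_supported k N : (k < N)%N -> box_supported N (raise_vac k).
Proof.
move=> kN m m_out; apply: raise_vac_eq0; apply: contra m_out => /andP [/eqP t1 /eqP t2].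
by apply/andP; split; apply/forallP => i; apply: leq_ltn_trans (occ_le_total _ i) _; rewrite ?t1 ?t2.
Qed.

Lemma box_dot_raise N h g : box_supported N g -> box_dot N (raise h) g = box_dot N h (lower g).
Proof.
move=> g_out; rewrite /raise /lower box_dot_mxpairl box_dot_mxpairr.
apply: eq_mxpair => a b.
by rewrite box_dot_Bdag // box_dot_Adag //; exact: box_supported_Bop.
Qed.

Lemma box_dot_vac N : (0 < N)%N -> box_dot N (@vac C n) (@vac C n) = 1.
Proof.
move=> N0; pose m0 : occ n := ([ffun _ => 0%N], [ffun _ => 0%N]).
have m0_in : in_box N m0 by apply/andP; split; apply/forallP => i; rewrite ffunE.
rewrite /box_dot (eq_bigr (fun p => (box_occ p == m0)%:R * 1)) => [|p _].
  by rewrite (sum_box_occ N m0 (fun _ => 1)) m0_in.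
by rewrite /vac; case: eqP; rewrite ?rmorph1 ?rmorph0 ?mul1r ?mul0r.
Qed.

Section Rank2Relation.
Variable d : C.
Hypothesis zzz : z *m adjmx z *m z = d *: z.

Lemma numA_raise f : numA (raise f) = fun m => raise (numA f) m + d * raise f m.
Proof.
apply: functional_extensionality => m; rewrite {1}/numA.
under eq_mxpair => b a do rewrite (shift2_mxpair (Adag_shift a) (Aop_shift b)).
under eq_mxpair => b a do under eq_mxpair => c e do rewrite Adag_Aop_Bdag_Adag.
under eq_mxpair => b a do rewrite mxpairD.
rewrite mxpairD mxpair_delta12 mulmxA zzz mxpairZ mxpairC.
congr (_ + _).
by rewrite /raise; apply: eq_mxpair => c e; rewrite (shift2_mxpair (Bdag_shift c) (Adag_shift e)).
Qed.

Lemma numB_raise f : numB (raise f) = fun m => raise (numB f) m + d * raise f m.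
Proof.
apply: functional_extensionality => m; rewrite {1}/numB.
under eq_mxpair => c a do rewrite (shift2_mxpair (Bdag_shift c) (Bop_shift a)).
under eq_mxpair => c a do under eq_mxpair => e b do rewrite Bdag_Bop_Bdag_Adag.
under eq_mxpair => c a do rewrite mxpairD.
rewrite mxpairD mxpair_delta21 zzz mxpairZ mxpairC.
congr (_ + _).
by rewrite /raise; apply: eq_mxpair => e b; rewrite (shift2_mxpair (Bdag_shift e) (Adag_shift b)).
Qed.

Lemma numAB_raise_vac k m :
  numA (raise_vac k) m + numB (raise_vac k) m = 2%:R * d * k%:R * raise_vac k m.
Proof.
elim: k m => [|k IH] m; first by rewrite numA_vac numB_vac addr0 mulr0 mul0r.
rewrite /raise_vac iterS -/(raise_vac k) numA_raise numB_raise.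
have -> : raise (numA (raise_vac k)) m + d * raise (raise_vac k) m +
    (raise (numB (raise_vac k)) m + d * raise (raise_vac k) m) =
    raise (fun m => numA (raise_vac k) m + numB (raise_vac k) m) m + 2%:R * d * raise (raise_vac k) m.
  by rewrite raiseD; ring.
by rewrite (functional_extensionality _ _ IH) raiseZ -natr1; ring.
Qed.

Hypothesis trz : \tr (adjmx z *m z) = d *+ 2.

Lemma lower_raise_vac k :
  lower (raise_vac k.+1) = fun m => d * (k.+1 * k.+2)%:R * raise_vac k m.
Proof.
apply: functional_extensionality; elim: k => [|k IH] m.
  by rewrite /raise_vac /= lower_raise lower_vac raise0 numA_vac numB_vac trz -mulr_natl; ring.
rewrite {1}/raise_vac iterS -/(raise_vac k.+1) lower_raise -[_ + numB _ _]addrA numAB_raise_vac.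
rewrite (functional_extensionality _ _ IH) raiseZ trz /raise_vac iterS -/(raise_vac k).
by rewrite !natrM -!natr1 -mulr_natl; ring.
Qed.

Lemma box_dot_raise_vac N J :
  (J < N)%N -> box_dot N (raise_vac J) (raise_vac J) = d ^+ J * (J`! * J.+1`!)%:R.
Proof.
elim: J N => [|J IH] N JN; first by rewrite box_dot_vac // expr0 mul1r.
rewrite {1}/raise_vac iterS -/(raise_vac J) box_dot_raise; last exact: raise_vac_box_supported.
rewrite lower_raise_vac box_dotZr IH; last exact: ltnW.
by rewrite (factS J.+1) (factS J) !natrM exprS; ring.
Qed.

End Rank2Relation.

Section SkewCoherent.
Hypothesis zT : z^T = - z.

Lemma half_Ftilz f : (fun m => 2%:R^-1 * Ftilz z f m) = raise f.
Proof.
apply: functional_extensionality => m.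
have zA a b : z b a = - z a b by move/matrixP: zT => /(_ a b); rewrite !mxE.
have AB_term : \sum_(a < n) \sum_(b < n) z a b * Adag a (Bdag b f) m = - raise f m.
  rewrite exchange_big /raise /mxpair -sumrN; apply: eq_bigr => b _.
  by rewrite -sumrN; apply: eq_bigr => a _; rewrite Adag_BdagC zA mulNr.
rewrite /Ftilz /Ftil; under eq_bigr do under eq_bigr do rewrite mulrBr.
under eq_bigr do rewrite sumrB.
rewrite sumrB AB_term opprK -[X in X + _]/(raise f m).
by field.
Qed.

Lemma exp_partialE J K m :
  (occ_total m.1 + occ_total m.2 = 2 * J)%N -> (J < K)%N ->
  exp_partial z K m = sqrtC (\det (1%:M - adjmx z *m z)) * ((J`!)%:R^-1 * raise_vac J m).
Proof.
move=> mJ JK; rewrite /exp_partial; congr (_ * _).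
have iterE k : iter k (fun g m => 2%:R^-1 * Ftilz z g m) (@vac C n) = raise_vac k.
  by elim: k => //= k ->; rewrite half_Ftilz.
under eq_bigr do rewrite iterE.
rewrite (bigD1 (Ordinal JK)) //= big1 ?addr0 // => k nk.
rewrite raise_vac_eq0 ?mulr0 //; apply: contra nk => /andP [/eqP t1 /eqP t2].
apply/eqP/val_inj => /=; move: mJ; rewrite t1 t2 addnn -mul2n.
by move/eqP; rewrite eqn_mul2l => /eqP.
Qed.

Lemma PiJ_ket_zeta psi J : is_ket_zeta z psi ->
  PiJ J psi = fun m => sqrtC (\det (1%:M - adjmx z *m z)) / (J`!)%:R * raise_vac J m.
Proof.
move=> ket; apply: functional_extensionality => m; rewrite PiJE; case: eqP => [mJ | mJ].
  have [K0 psiE] := ket m.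
  by rewrite (psiE (maxn K0 J.+1)) ?leq_maxl // (exp_partialE mJ) ?mulrA // leq_maxr.
rewrite raise_vac_eq0 ?mulr0 //; apply/negP => /andP [/eqP t1 /eqP t2].
by apply: mJ; rewrite t1 t2 addnn mul2n.
Qed.

End SkewCoherent.

End Ladder.

End Fock.

Theorem mainTheorem18 (C : numClosedFieldType) (n : nat) (zeta : 'M[C]_n)
    (psi : state C n) (J : nat) :
  in_Omega zeta -> \rank zeta = 2%N -> is_ket_zeta zeta psi ->
  exists N, forall N', (N <= N')%N ->
    norm2_box (PiJ J psi) N' =
      \det (1%:M - adjmx zeta *m zeta) *
      (2%:R^-1 * \tr (adjmx zeta *m zeta)) ^+ J * (J.+1)%:R.
Proof.
move=> [zT _] rank2 ket.
have [U zE] := skew_rank2_factor zT rank2.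
set d := \det (adjmx U *m U).
have zzz : zeta *m adjmx zeta *m zeta = d *: zeta by rewrite zE skew2_cube.
have trz : \tr (adjmx zeta *m zeta) = d *+ 2 by rewrite zE mxtrace_skew2.
have half_tr : 2%:R^-1 * \tr (adjmx zeta *m zeta) = d by rewrite trz mulr2n; field.
have det_ge0 : 0 <= \det (1%:M - adjmx zeta *m zeta) by rewrite zE det_skew2_ge0.
exists J.+1 => N JN.
rewrite (PiJ_ket_zeta zT J ket) norm2_boxZ (box_dot_raise_vac zzz trz) // half_tr.
rewrite normrM exprMn -normrX sqrtCK (ger0_norm det_ge0) normfV normr_nat (factS J) natrM.
by field; rewrite pnatr_eq0 -lt0n fact_gt0.
Qed.
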